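(* Let \(A\) be a geometrically fast set of positive bumps with a fixed marking witnessing this. If \(\mathtt{w}\) is an \(A\)-word and \(x\in J(\mathtt{w})\), then \(\mathtt{w}\) is locally reduced at \(x\) if and only if \(\mathtt{w}\) is freely reduced and \(\operatorname{dest}(a)\subseteq\operatorname{supt}(b)\) whenever \(\mathtt{ab}\) are consecutive symbols in \(\mathtt{w}\). In particular, if \(\mathtt{w}\) is freely reduced and locally reduced at some element of \(J(\mathtt{w})\), then \(\mathtt{w}\) is locally reduced at every element of \(J(\mathtt{w})\).
   Context: \(I=[0,1]\); homeomorphisms act on the right. A positive bump is an element of \(\operatorname{Homeo}_+(I)\) whose support \(\{t:ta\neq t\}\) is a single open interval \((x,y)\) on which \(ta>t\); \(x\), \(y\) are its left and right transition points. \(A\) is geometrically proper if no point is a left transition point of two distinct elements, nor a right transition point of two distinct elements. A marking assigns each \(a\in A\) a marker \(t\in\operatorname{supt}(a)\); for \(a\) with support \((x,y)\), \(\operatorname{src}(a)=(x,t)\), \(\operatorname{dest}(a)=[ta,y)\), \(\operatorname{src}(a^{-1})=\operatorname{dest}(a)\), \(\operatorname{dest}(a^{-1})=\operatorname{src}(a)\). \(A\) is geometrically fast if geometrically proper and the marking makes these feet pairwise disjoint. \(A^{\pm}=A\cup A^{-1}\); \(\operatorname{supt}(a^{-1})=\operatorname{supt}(a)\). An \(A\)-word is a finite string over \(A^{\pm}\), with evaluation \(w\). \(\mathtt{w}\) is locally reduced at \(t\) if it is freely reduced and for every prefix \(\mathtt{ua}\) (\(a\in A^\pm\)), \(tua\neq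 tu\). For a nonempty word with first symbol \(a\), \(J(\mathtt{w}):=\operatorname{supt}(a)\setminus\operatorname{src}(a)\). *)

From Stdlib Require Import Reals List.
Import ListNotations.
Open Scope R_scope.

Definition inI (t : R) : Prop := 0 <= t <= 1.

Definition homeo_plus (f finv : R -> R) : Prop :=
  (forall t, inI t -> inI (f t)) /\
  (forall t, inI t -> inI (finv t)) /\
  (forall t, inI t -> finv (f t) = t) /\
  (forall t, inI t -> f (finv t) = t) /\
  (forall s t, inI s -> inI t -> s < t -> f s < f t) /\
  (forall t, inI t -> forall eps, 0 < eps ->
     exists delta, 0 < delta /\
       forall s, inI s -> Rabs (s - t) < delta -> Rabs (f s - f t) < eps).

(* support {t in I : t f <> t} (homeomorphisms act on the right: t f = f t) *)
Definition supt (f : R -> R) (t : R) : Prop := inI t /\ f t <> t.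

Definition pos_bump_at (f : R -> R) (x y : R) : Prop :=
  0 <= x /\ x < y /\ y <= 1 /\
  (forall t, supt f t <-> x < t < y) /\
  (forall t, x < t < y -> f t > t).

Definition left_tp (f : R -> R) (x : R) : Prop := exists y, pos_bump_at f x y.
Definition right_tp (f : R -> R) (y : R) : Prop := exists x, pos_bump_at f x y.

(* A set of positive bumps, indexed by the type A: element a is the
   homeomorphism f a, with inverse finv a. *)
Definition bump_set (A : Type) (f finv : A -> R -> R) : Prop :=
  forall a, homeo_plus (f a) (finv a) /\ exists x y, pos_bump_at (f a) x y.

Definition geom_proper (A : Type) (f : A -> R -> R) : Prop :=
  (forall a b x, left_tp (f a) x -> left_tp (f b) x -> a = b) /\
  (forall a b y, right_tp (f a) y -> right_tp (f b) y -> a = b).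

(* Symbols of A^{+-}: (a, true) = a, (a, false) = a^{-1}. *)
Definition sym (A : Type) : Type := (A * bool)%type.

(* Feet w.r.t. a marking m : A -> R.  For a with support (x,y):
   src(a) = (x, m a),  dest(a) = [ (m a) a, y ),
   src(a^-1) = dest(a), dest(a^-1) = src(a). *)
Definition src_pos {A : Type} (f : A -> R -> R) (m : A -> R) (a : A) (t : R) : Prop :=
  supt (f a) t /\ t < m a.
Definition dest_pos {A : Type} (f : A -> R -> R) (m : A -> R) (a : A) (t : R) : Prop :=
  supt (f a) t /\ f a (m a) <= t.

Definition src {A : Type} (f : A -> R -> R) (m : A -> R) (c : sym A) : R -> Prop :=
  if snd c then src_pos f m (fst c) else dest_pos f m (fst c).
Definition dest {A : Type} (f : A -> R -> R) (m : A -> R) (c : sym A) : R -> Prop :=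
  if snd c then dest_pos f m (fst c) else src_pos f m (fst c).

(* supt(a^{-1}) = supt(a) *)
Definition supt_sym {A : Type} (f : A -> R -> R) (c : sym A) : R -> Prop :=
  supt (f (fst c)).

Definition marking (A : Type) (f : A -> R -> R) (m : A -> R) : Prop :=
  forall a, supt (f a) (m a).

(* The feet {src(a), dest(a) : a in A^{+-}} = {src_pos a, dest_pos a : a in A}
   are pairwise disjoint: distinct feet (a,s) <> (b,s') have empty intersection,
   where (a,true) denotes src(a) and (a,false) denotes dest(a). *)
Definition foot {A : Type} (f : A -> R -> R) (m : A -> R) (a : A) (s : bool) : R -> Prop :=
  if s then src_pos f m a else dest_pos f m a.

Definition geom_fast_marking (A : Type) (f : A -> R -> R) (m : A -> R) : Prop :=
  geom_proper A f /\ marking A f m /\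
  (forall a b s s' t, (a, s) <> (b, s') -> foot f m a s t -> foot f m b s' t -> False).

Definition act {A : Type} (f finv : A -> R -> R) (t : R) (c : sym A) : R :=
  if snd c then f (fst c) t else finv (fst c) t.

Definition eval_at {A : Type} (f finv : A -> R -> R) (t : R) (w : list (sym A)) : R :=
  fold_left (act f finv) w t.

Definition inv_sym {A : Type} (c : sym A) : sym A := (fst c, negb (snd c)).

Definition freely_reduced {A : Type} (w : list (sym A)) : Prop :=
  forall u v c, w <> u ++ c :: inv_sym c :: v.

Definition locally_reduced {A : Type} (f finv : A -> R -> R) (w : list (sym A)) (t : R) : Prop :=
  freely_reduced w /\
  forall u c v, w = u ++ c :: v ->
    act f finv (eval_at f finv t u) c <> eval_at f finv t u.

(* J(w) = supt(a) \ src(a), a the first symbol of w (empty for the empty word,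
   for which J is undefined). *)
Definition Jset {A : Type} (f : A -> R -> R) (m : A -> R) (w : list (sym A)) (t : R) : Prop :=
  match w with
  | [] => False
  | c :: _ => supt_sym f c t /\ ~ src f m c t
  end.

From Stdlib Require Import Reals List Lra Classical.
Import ListNotations.
Open Scope R_scope.

(* Ping-pong: if a point lies in [supt(c) \ src(c)] then applying [c] lands it
   in [dest(c)].  Starting from [x] in [J(w)], the point reached after a prefix
   of [w] thus stays in [J] of the remaining suffix, provided each [dest(c)]
   point also lies in the support of the next letter [d]; free reduction
   together with disjointness of the feet keeps it out of [src(d)].  Local
   reduction forces exactly this support condition (otherwise [d] would fix
   the point), and one point of [dest(c)] in [supt(d)] gives all of [dest(c)],
   since [dest(c)] is an interval which cannot leave [supt(d)] without crossing
   a foot of [d].  The condition does not mention [x], whence the second part. *)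

Section Homeomorphisms.
Variables g ginv : R -> R.
Hypothesis Hg : homeo_plus g ginv.

Lemma homeo_plus_le s t : inI s -> inI t -> s <= t -> g s <= g t.
Proof.
  destruct Hg as [_ [_ [_ [_ [Hlt _]]]]].
  intros Hs Ht [Hst | <-]; [left; auto | right; reflexivity].
Qed.

Lemma homeo_plus_inj s t : inI s -> inI t -> g s = g t -> s = t.
Proof.
  destruct Hg as [_ [_ [_ [_ [Hlt _]]]]].
  intros Hs Ht E; destruct (total_order_T s t) as [[H | H] | H]; auto.
  - specialize (Hlt s t Hs Ht H); lra.
  - specialize (Hlt t s Ht Hs H); lra.
Qed.

Lemma supt_image t : supt g t -> supt g (g t).
Proof.
  destruct Hg as [HI _]; intros [Ht Hne]; split; auto.
  intro E; apply Hne, homeo_plus_inj; auto.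
Qed.

Lemma homeo_plus_inv_fixed t : inI t -> g t = t -> ginv t = t.
Proof.
  destruct Hg as [_ [_ [Hinvg _]]]; intros Ht E.
  rewrite <- E at 1; apply Hinvg; exact Ht.
Qed.

Lemma homeo_plus_fixed_of_inv t : inI t -> ginv t = t -> g t = t.
Proof.
  destruct Hg as [_ [_ [_ [Hginv _]]]]; intros Ht E.
  rewrite <- E at 1; apply Hginv; exact Ht.
Qed.

Lemma supt_preimage t : supt g t -> supt g (ginv t).
Proof.
  destruct Hg as [_ [HIinv [_ [Hginv _]]]]; intros [Ht Hne]; split; auto.
  intro E; rewrite Hginv in E by exact Ht.
  apply Hne, homeo_plus_fixed_of_inv; auto.
Qed.

End Homeomorphisms.

Section FastBumps.
Variables (A : Type) (f finv : A -> R -> R) (m : A -> R).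
Hypothesis Hbump : bump_set A f finv.
Hypothesis Hfast : geom_fast_marking A f m.

Let Hhomeo a : homeo_plus (f a) (finv a) := proj1 (Hbump a).

Lemma act_moves c p : supt_sym f c p -> act f finv p c <> p.
Proof.
  destruct c as [a []]; unfold supt_sym, act; simpl; intros [Hp Hne]; auto.
  intro E; apply Hne, (homeo_plus_fixed_of_inv _ _ (Hhomeo a)); auto.
Qed.

Lemma act_fixes c p : inI p -> ~ supt_sym f c p -> act f finv p c = p.
Proof.
  intros Hp Hn; assert (E : f (fst c) p = p).
  { apply NNPP; intro H; apply Hn; split; auto. }
  destruct c as [a []]; unfold act; simpl in *; auto.
  apply (homeo_plus_inv_fixed _ _ (Hhomeo a)); auto.
Qed.

Lemma dest_supt c t : dest f m c t -> supt_sym f c t.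
Proof. destruct c as [a []]; unfold dest, supt_sym, src_pos, dest_pos; simpl; tauto. Qed.

Lemma act_dest c p : supt_sym f c p -> ~ src f m c p -> dest f m c (act f finv p c).
Proof.
  destruct Hfast as [_ [Hm _]].
  destruct c as [a []]; unfold supt_sym, src, dest, act, src_pos, dest_pos; simpl;
    intros Hp Hn; pose proof (Hhomeo a) as Ha.
  - split; [apply (supt_image _ _ Ha); auto |].
    apply (homeo_plus_le _ _ Ha); [apply Hm | apply Hp |].
    apply Rnot_lt_le; intro; apply Hn; auto.
  - assert (HpI : inI p) by apply Hp.
    split; [apply (supt_preimage _ _ Ha); auto |].
    apply Rnot_le_lt; intro H; apply Hn; split; auto.
    pose proof Ha as [_ [HIinv [_ [Hginv _]]]]; rewrite <- (Hginv p HpI).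
    apply (homeo_plus_le _ _ Ha); [apply Hm | apply HIinv, HpI | exact H].
Qed.

Lemma src_foot c : src f m c = foot f m (fst c) (snd c).
Proof. destruct c as [a []]; reflexivity. Qed.

Lemma dest_foot c : dest f m c = foot f m (fst c) (negb (snd c)).
Proof. destruct c as [a []]; reflexivity. Qed.

Lemma dest_src_disjoint c e t : e <> inv_sym c -> dest f m c t -> ~ src f m e t.
Proof.
  destruct Hfast as [_ [_ Hdisj]]; intros He Hd Hs.
  rewrite dest_foot in Hd; rewrite src_foot in Hs.
  refine (Hdisj _ _ _ _ t _ Hd Hs).
  destruct c as [a s], e as [b s']; unfold inv_sym in He; simpl.
  intro E; inversion E; subst; apply He; reflexivity.
Qed.

Lemma foot_convex a s t1 t2 q :
  foot f m a s t1 -> foot f m a s t2 -> t1 <= q <= t2 -> foot f m a s q.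
Proof.
  destruct (Hbump a) as [_ [x [y [_ [_ [_ [Hsupt _]]]]]]].
  destruct s; unfold foot, src_pos, dest_pos;
    intros [S1 L1] [S2 L2] Hq; apply Hsupt in S1, S2;
    (split; [apply Hsupt; lra | lra]).
Qed.

Lemma supt_exit_meets_foot a p t : supt (f a) p -> ~ supt (f a) t ->
  exists s q, foot f m a s q /\ (t <= q <= p \/ p <= q <= t).
Proof.
  destruct Hfast as [_ [Hm _]].
  destruct (Hbump a) as [_ [x [y [_ [_ [_ [Hsupt _]]]]]]].
  intros Hp Ht.
  pose proof (Hm a) as Hma; pose proof (supt_image _ _ (Hhomeo a) _ Hma) as Hfma.
  apply Hsupt in Hp, Hma, Hfma; rewrite Hsupt in Ht.
  destruct (Rle_or_lt t x) as [Hleft | Hright].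
  - exists true, ((x + Rmin p (m a)) / 2).
    unfold Rmin; destruct (Rle_dec p (m a));
      (split; [split; [apply Hsupt |] | left]; lra).
  - assert (y <= t) by (apply Rnot_lt_le; intro; apply Ht; lra).
    exists false, ((Rmax p (f a (m a)) + y) / 2).
    unfold Rmax; destruct (Rle_dec p (f a (m a)));
      (split; [split; [apply Hsupt |] | right]; lra).
Qed.

Lemma dest_sub_supt c d p : d <> inv_sym c -> dest f m c p -> supt_sym f d p ->
  forall t, dest f m c t -> supt_sym f d t.
Proof.
  intros Hcd Hp Hpd t Ht.
  destruct (classic (fst c = fst d)) as [E | NE].
  - unfold supt_sym; rewrite <- E; apply dest_supt; auto.
  - apply NNPP; intro Hn.
    destruct (supt_exit_meets_foot _ _ _ Hpd Hn) as [s [q [Hq Hbetween]]].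
    destruct Hfast as [_ [_ Hdisj]].
    rewrite dest_foot in Hp, Ht.
    apply (Hdisj (fst c) (fst d) (negb (snd c)) s q); auto.
    + intro E; inversion E; auto.
    + destruct Hbetween; [apply (foot_convex _ _ t p) | apply (foot_convex _ _ p t)]; auto.
Qed.

Lemma eval_at_snoc x u c :
  eval_at f finv x (u ++ [c]) = act f finv (eval_at f finv x u) c.
Proof. unfold eval_at; rewrite fold_left_app; reflexivity. Qed.

Lemma freely_reduced_next (w u v : list (sym A)) (c e : sym A) :
  freely_reduced w -> w = u ++ c :: e :: v -> e <> inv_sym c.
Proof. intros Hfr -> ->; apply (Hfr u v c); reflexivity. Qed.

Lemma eval_prefix_Jset_suffix w x : Jset f m w x -> freely_reduced w ->
  (forall u c d v, w = u ++ c :: d :: v ->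
     dest f m c (eval_at f finv x (u ++ [c])) ->
     supt_sym f d (eval_at f finv x (u ++ [c]))) ->
  forall u e v, w = u ++ e :: v -> Jset f m (e :: v) (eval_at f finv x u).
Proof.
  intros HJ Hfr Hstep u; induction u as [| c u IH] using rev_ind; intros e v E.
  - simpl in E; subst w; exact HJ.
  - rewrite <- app_assoc in E; simpl in E.
    destruct (IH c (e :: v) E) as [Hsupt Hsrc].
    assert (Hd : dest f m c (eval_at f finv x (u ++ [c]))).
    { rewrite eval_at_snoc; apply act_dest; auto. }
    split.
    + apply (Hstep u c e v E Hd).
    + apply (dest_src_disjoint c); auto.
      apply (freely_reduced_next w u v c e Hfr E).
Qed.

Lemma locally_reduced_iff_dest_sub_supt w x : Jset f m w x ->
  (locally_reduced f finv w x <->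
   (freely_reduced w /\
    forall u c d v, w = u ++ c :: d :: v ->
      forall t, dest f m c t -> supt_sym f d t)).
Proof.
  intro HJ; split.
  - intros [Hfr Hlr].
    assert (Hinv := eval_prefix_Jset_suffix w x HJ Hfr).
    assert (Hstep : forall u c d v, w = u ++ c :: d :: v ->
              dest f m c (eval_at f finv x (u ++ [c])) ->
              supt_sym f d (eval_at f finv x (u ++ [c]))).
    { intros u c d v E Hd; apply NNPP; intro Hn.
      apply (Hlr (u ++ [c]) d v); [rewrite <- app_assoc; exact E |].
      apply act_fixes; auto; apply dest_supt in Hd; apply Hd. }
    split; auto.
    intros u c d v E.
    assert (Hd : dest f m c (eval_at f finv x (u ++ [c]))).
    { destruct (Hinv Hstep u c (d :: v) E) as [Hsupt Hsrc].
      rewrite eval_at_snoc; apply act_dest; auto. }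
    apply (dest_sub_supt c d _ (freely_reduced_next w u v c d Hfr E) Hd).
    apply (Hstep u c d v E Hd).
  - intros [Hfr Hsub]; split; auto.
    intros u c v E.
    enough (Hc : Jset f m (c :: v) (eval_at f finv x u)) by apply act_moves, Hc.
    apply (eval_prefix_Jset_suffix w x HJ Hfr); auto.
    intros u' c' d v' E'; apply (Hsub u' c' d v' E').
Qed.

End FastBumps.

Theorem lemma5p3 (A : Type) (f finv : A -> R -> R) (m : A -> R)
  (Hbump : bump_set A f finv) (Hfast : geom_fast_marking A f m) :
  (forall (w : list (sym A)) (x : R), Jset f m w x ->
     (locally_reduced f finv w x <->
      (freely_reduced w /\
       forall u c d v, w = u ++ c :: d :: v ->
         forall t, dest f m c t -> supt_sym f d t))) /\
  (forall (w : list (sym A)),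
     freely_reduced w ->
     (exists x, Jset f m w x /\ locally_reduced f finv w x) ->
     forall y, Jset f m w y -> locally_reduced f finv w y).
Proof.
  split.
  - apply locally_reduced_iff_dest_sub_supt; auto.
  - intros w _ [x [HJx Hx]] y HJy.
    apply (locally_reduced_iff_dest_sub_supt A f finv m Hbump Hfast w y HJy).
    apply (locally_reduced_iff_dest_sub_supt A f finv m Hbump Hfast w x HJx), Hx.
Qed.
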